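(* Let $k$ be a kernel on a space $\mathcal X$, let $x_1,\dots,x_n \in \mathcal X$, let $\hat{\mathbb P}_n = \frac1n\sum_i\delta_{x_i}$, and let $K$ be the kernel matrix $K_{ij} = k(x_i,x_j)$, assumed invertible. Let $\ell_f:\mathcal X\to\mathbb R$ and let $\vec\ell \in \mathbb R^n$ have entries $\vec\ell_i = \ell_f(x_i)$. Let $\epsilon>0$ and consider the problem $$\sup_{w\in\mathbb R^n} \sum_{i=1}^n w_i \ell_f(x_i) \quad\text{s.t.}\quad d_{\mathrm{MMD}}\Big(\sum_{i=1}^n w_i\delta_{x_i}, \hat{\mathbb P}_n\Big) \leq \epsilon,\ \ \sum_{i=1}^n w_i = 1,\ \ w_i \geq 0\ \forall i.$$ If $\epsilon$ is small enough that the constraints $w_i \geq 0$ are not active, then the optimal value of this problem is $$\mathbb{E}_{x\sim\hat{\mathbb P}_n}[\ell_f(x)] + \epsilon\sqrt{\vec\ell^T K^{-1}\vec\ell - \frac{(\vec\ell^T K^{-1}\mathbf 1)^2}{\mathbf 1^T K^{-1}\mathbf 1}}.$$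
   Context: For weights $w$, $d_{\mathrm{MMD}}(\sum_i w_i\delta_{x_i},\hat{\mathbb P}_n) = \|\sum_i (w_i - \tfrac1n) k(x_i,\cdot)\|_{\mathcal H}$, so its square equals $(w-\frac1n\mathbf 1)^T K (w - \frac1n\mathbf 1)$. ''The constraints $w_i\ge 0$ are not active'' means the optimal value is unchanged when these constraints are dropped. $\mathbf 1$ is the all-ones vector and $\mathbb{E}_{x\sim\hat{\mathbb P}_n}[\ell_f(x)] = \frac1n\sum_i \ell_f(x_i)$. *)

From HB Require Import structures.
From mathcomp Require Import all_boot all_order all_algebra.
From mathcomp Require Import all_classical all_reals.
From mathcomp Require Import ereal.
Set Implicit Arguments. Unset Strict Implicit. Unset Printing Implicit Defensive.
Import Order.TTheory GRing.Theory Num.Theory.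
Local Open Scope ring_scope.

Definition is_kernel (R : realType) (X : Type) (k : X -> X -> R) : Prop :=
  (forall x y, k x y = k y x) /\
  (forall (m : nat) (y : 'I_m -> X) (c : 'I_m -> R),
      0 <= \sum_(i < m) \sum_(j < m) c i * c j * k (y i) (y j)).

Definition kmat (R : realType) (X : Type) (k : X -> X -> R) (n : nat)
  (x : 'I_n -> X) : 'M[R]_n := \matrix_(i, j) k (x i) (x j).

Definition ones (R : realType) (n : nat) : 'cV[R]_n := const_mx 1.

(* d_MMD(sum_i w_i delta_{x_i}, empirical measure) = sqrt((w - 1/n)^T K (w - 1/n)) *)
Definition dMMD (R : realType) (X : Type) (k : X -> X -> R) (n : nat)
  (x : 'I_n -> X) (w : 'cV[R]_n) : R :=
  let v := w - n%:R^-1 *: ones R n in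
  Num.sqrt (((v^T *m kmat k x) *m v) 0 0).

Definition objective (R : realType) (X : Type) (n : nat) (x : 'I_n -> X)
  (l : X -> R) (w : 'cV[R]_n) : R := \sum_(i < n) w i 0 * l (x i).

Definition feas_free (R : realType) (X : Type) (k : X -> X -> R) (n : nat)
  (x : 'I_n -> X) (eps : R) : set 'cV[R]_n :=
  [set w | dMMD k x w <= eps /\ \sum_(i < n) w i 0 = 1].

Definition feas (R : realType) (X : Type) (k : X -> X -> R) (n : nat)
  (x : 'I_n -> X) (eps : R) : set 'cV[R]_n :=
  [set w | dMMD k x w <= eps /\ \sum_(i < n) w i 0 = 1 /\ forall i, 0 <= w i 0].

Definition optval (R : realType) (X : Type) (n : nat) (x : 'I_n -> X)
  (l : X -> R) (F : set 'cV[R]_n) : \bar R :=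
  ereal_sup [set (objective x l w)%:E | w in F].

(* Centre the weights at the uniform vector u = 1/n: the constraints become
   1^T v = 0 and v^T K v <= eps^2 for v = w - u.  On that slice l^T v = g^T v,
   where g = l - t 1 is l made K^-1-orthogonal to 1, and
   g^T v = <K^-1 g, v>_K <= eps sqrt (g^T K^-1 g) by Cauchy-Schwarz for the
   semi-inner product of the PSD matrix K, with equality at
   v = eps K^-1 g / sqrt (g^T K^-1 g).  Expanding g^T K^-1 g gives the Schur
   complement l^T K^-1 l - (l^T K^-1 1)^2 / 1^T K^-1 1. *)

From HB Require Import structures.
From mathcomp Require Import all_boot all_order all_algebra.
From mathcomp Require Import all_classical all_reals ereal.
From mathcomp Require Import ring lra.
Import Order.TTheory GRing.Theory Num.Theory.

Set Implicit Arguments.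
Unset Strict Implicit.
Unset Printing Implicit Defensive.

Local Open Scope ring_scope.

Lemma quad_ge0_discr (R : realFieldType) (a b c : R) : 0 <= c ->
  (forall s, 0 <= a - 2 * s * b + s ^+ 2 * c) -> b ^+ 2 <= a * c.
Proof.
move=> c_ge0 quad_ge0.
have a_ge0 : 0 <= a by have := quad_ge0 0; rewrite !(mul0r, mulr0) expr0n /=; lra.
have [c0|c_neq0] := eqVneq c 0.
  rewrite c0 mulr0; have [->|b_neq0] := eqVneq b 0; first by rewrite expr0n.
  have := quad_ge0 ((a + 1) / (2 * b)); rewrite c0 mulr0 addr0.
  have -> : 2 * ((a + 1) / (2 * b)) * b = a + 1 by field.
  lra.
have c_gt0 : 0 < c by rewrite lt_def c_neq0.
have := quad_ge0 (b / c).
have -> : a - 2 * (b / c) * b + (b / c) ^+ 2 * c = a - b ^+ 2 / c by field.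
by rewrite subr_ge0 ler_pdivrMr.
Qed.

Section DotProduct.
Variables (R : realFieldType) (n : nat).
Implicit Types (p q r : 'cV[R]_n) (M : 'M[R]_n).

Definition dotmx p q : R := (p^T *m q) 0 0.

Definition form M p q : R := dotmx p (M *m q).

Lemma formE M p q : form M p q = (p^T *m M *m q) 0 0.
Proof. by rewrite /form /dotmx mulmxA. Qed.

Lemma dotmx_sum p q : dotmx p q = \sum_i p i 0 * q i 0.
Proof. by rewrite /dotmx mxE; apply: eq_bigr => i _; rewrite mxE. Qed.

Lemma form_sum M p q : form M p q = \sum_i \sum_j p i 0 * q j 0 * M i j.
Proof.
rewrite /form dotmx_sum; apply: eq_bigr => i _.
by rewrite mxE big_distrr; apply: eq_bigr => j _ /=; ring.
Qed.

Lemma dotmxC p q : dotmx p q = dotmx q p.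
Proof. by rewrite !dotmx_sum; apply: eq_bigr => i _; rewrite mulrC. Qed.

Lemma dotmxDl p q r : dotmx (p + q) r = dotmx p r + dotmx q r.
Proof. by rewrite !dotmx_sum -big_split; apply: eq_bigr => i _; rewrite mxE mulrDl. Qed.

Lemma dotmxBl p q r : dotmx (p - q) r = dotmx p r - dotmx q r.
Proof. by rewrite !dotmx_sum -sumrB; apply: eq_bigr => i _; rewrite !mxE mulrBl. Qed.

Lemma dotmxZl s p q : dotmx (s *: p) q = s * dotmx p q.
Proof. by rewrite !dotmx_sum mulr_sumr; apply: eq_bigr => i _; rewrite mxE mulrA. Qed.

Lemma dotmxDr p q r : dotmx r (p + q) = dotmx r p + dotmx r q.
Proof. by rewrite dotmxC dotmxDl !(dotmxC r). Qed.

Lemma dotmxBr p q r : dotmx r (p - q) = dotmx r p - dotmx r q.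
Proof. by rewrite dotmxC dotmxBl !(dotmxC r). Qed.

Lemma dotmxZr s p q : dotmx p (s *: q) = s * dotmx p q.
Proof. by rewrite dotmxC dotmxZl dotmxC. Qed.

Lemma dotmx_mulmx M p q : dotmx p (M *m q) = dotmx (M^T *m p) q.
Proof. by rewrite /dotmx trmx_mul trmxK mulmxA. Qed.

Lemma formBl M p q r : form M (p - q) r = form M p r - form M q r.
Proof. exact: dotmxBl. Qed.

Lemma formZl M s p q : form M (s *: p) q = s * form M p q.
Proof. exact: dotmxZl. Qed.

Lemma formBr M p q r : form M r (p - q) = form M r p - form M r q.
Proof. by rewrite /form mulmxBr dotmxBr. Qed.

Lemma formZr M s p q : form M p (s *: q) = s * form M p q.
Proof. by rewrite /form -scalemxAr dotmxZr. Qed.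

Lemma dotmx_eq0 p : dotmx p p = 0 -> p = 0.
Proof.
rewrite dotmx_sum => /eqP; rewrite psumr_eq0 => [/allP sq0|i _]; last first.
  by rewrite -expr2 sqr_ge0.
apply/matrixP => i j; rewrite ord1 mxE.
by have /= := sq0 i (mem_index_enum i); rewrite mulf_eq0 orbb => /eqP.
Qed.

Definition orthog M l o : 'cV[R]_n := l - (form M l o / form M o o) *: o.

End DotProduct.

Section SymmetricForm.
Variables (R : realFieldType) (n : nat) (M : 'M[R]_n).
Hypothesis M_sym : M^T = M.
Implicit Types (p q l o : 'cV[R]_n).

Lemma formC p q : form M p q = form M q p.
Proof. by rewrite /form dotmx_mulmx M_sym dotmxC. Qed.

Lemma form_invmxE p q : M \in unitmx ->
  form (invmx M) p q = form M (invmx M *m p) (invmx M *m q).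
Proof.
by move=> M_unit; rewrite /form mulmxA mulmxV // mul1mx dotmx_mulmx trmx_inv M_sym.
Qed.

Section Orthogonalization.
Variables l o : 'cV[R]_n.
Hypothesis o_nondeg : form M o o != 0.

Lemma form_orthogr : form M o (orthog M l o) = 0.
Proof. by rewrite formBr formZr (formC o l); field. Qed.

Lemma form_orthog : form M l (orthog M l o) = form M l l - form M l o ^+ 2 / form M o o.
Proof. by rewrite formBr formZr; field. Qed.

Lemma form_orthog_self :
  form M (orthog M l o) (orthog M l o) = form M l l - form M l o ^+ 2 / form M o o.
Proof. by rewrite {1}/orthog formBl formZl form_orthogr mulr0 subr0 form_orthog. Qed.

End Orthogonalization.
End SymmetricForm.

Section PsdForm.
Variables (R : realFieldType) (n : nat) (M : 'M[R]_n).
Hypotheses (M_sym : M^T = M) (M_psd : forall p, 0 <= form M p p).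
Implicit Types p q : 'cV[R]_n.

Lemma form_cauchy_schwarz p q : form M p q ^+ 2 <= form M p p * form M q q.
Proof.
apply: quad_ge0_discr (M_psd q) _ => s.
have -> : form M p p - 2 * s * form M p q + s ^+ 2 * form M q q =
          form M (p - s *: q) (p - s *: q).
  by rewrite formBl !formBr !formZl !formZr (formC M_sym q p); ring.
exact: M_psd.
Qed.

Lemma form_invmx_gt0 p : M \in unitmx -> p != 0 -> 0 < form (invmx M) p p.
Proof.
move=> M_unit p_neq0; rewrite lt_def form_invmxE // M_psd andbT -form_invmxE //.
apply: contra p_neq0 => /eqP Ap0; apply/eqP/dotmx_eq0.
have := form_cauchy_schwarz (invmx M *m p) p; rewrite -form_invmxE // Ap0 mul0r.
rewrite /form dotmx_mulmx M_sym mulmxA mulmxV // mul1mx.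
by rewrite le_eqVlt ltNge sqr_ge0 orbF sqrf_eq0 => /eqP.
Qed.

End PsdForm.

Section MmdSlice.
Variables (R : rcfType) (n : nat) (M : 'M[R]_n) (l o u : 'cV[R]_n) (eps : R).
Hypotheses (M_sym : M^T = M) (M_psd : forall p, 0 <= form M p p).
Hypotheses (M_unit : M \in unitmx) (o_neq0 : o != 0).
Hypotheses (o_u : dotmx o u = 1) (eps_ge0 : 0 <= eps).

Local Notation A := (invmx M).
Local Notation g := (orthog A l o).
Local Notation D := (form A l l - form A l o ^+ 2 / form A o o).

Lemma form_le_sqrt p q : form M p q <= Num.sqrt (form M p p) * Num.sqrt (form M q q).
Proof.
rewrite -sqrtrM ?M_psd //; apply: le_trans (ler_norm _) _.
by rewrite -sqrtr_sqr ler_wsqrtr // form_cauchy_schwarz.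
Qed.

Let A_sym : A^T = A. Proof. by rewrite trmx_inv M_sym. Qed.

Let oAo_neq0 : form A o o != 0. Proof. by rewrite gt_eqF // form_invmx_gt0. Qed.

Let form_orthog_invmx : form M (A *m g) (A *m g) = D.
Proof. by rewrite -form_invmxE // form_orthog_self. Qed.

Lemma slice_dotmx_le w : dotmx o w = 1 -> Num.sqrt (form M (w - u) (w - u)) <= eps ->
  dotmx l w <= dotmx l u + eps * Num.sqrt D.
Proof.
move=> o_w mmd_w; set v := w - u.
have o_v : dotmx o v = 0 by rewrite dotmxBr o_w o_u subrr.
have l_v : dotmx l v = form M v (A *m g).
  rewrite /form mulmxA mulmxV // mul1mx (dotmxC v) /orthog.
  by rewrite dotmxBl dotmxZl o_v mulr0 subr0.
rewrite -(subrK u w) -/v dotmxDr addrC lerD2l l_v.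
apply: le_trans (form_le_sqrt _ _) _.
by rewrite form_orthog_invmx ler_wpM2r ?sqrtr_ge0.
Qed.

Lemma slice_dotmx_max : exists2 w,
  dotmx o w = 1 /\ Num.sqrt (form M (w - u) (w - u)) <= eps &
  dotmx l w = dotmx l u + eps * Num.sqrt D.
Proof.
have D_ge0 : 0 <= D by rewrite -form_orthog_invmx M_psd.
set r := Num.sqrt D; set s := eps / r.
have s_ge0 : 0 <= s by rewrite divr_ge0 ?sqrtr_ge0.
have [sr sD] : s * r <= eps /\ s * D = eps * r.
  rewrite -(sqr_sqrtr D_ge0) -/r /s; have [->|r_neq0] := eqVneq r 0.
    (* when D = 0 the maximiser is u itself, as eps / 0 = 0 *)
    by rewrite invr0 !mulr0 mul0r.
  by split; [rewrite divfK | field].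
exists (s *: (A *m g) + u); first split.
- by rewrite dotmxDr dotmxZr o_u [dotmx o _](form_orthogr A_sym l oAo_neq0) mulr0 add0r.
- rewrite addrK formZl formZr form_orthog_invmx mulrA -expr2 sqrtrM ?sqr_ge0 //.
  by rewrite sqrtr_sqr ger0_norm.
- by rewrite dotmxDr dotmxZr [dotmx l _](form_orthog l oAo_neq0) sD addrC.
Qed.

End MmdSlice.

Lemma ereal_sup_attained (R : realType) (T : Type) (S : set T) (f : T -> R) (m : R) :
  (forall w, S w -> f w <= m) -> (exists2 w, S w & f w = m) ->
  ereal_sup [set (f w)%:E | w in S] = m%:E.
Proof.
move=> f_le [w Sw fw]; apply/eqP; rewrite eq_le; apply/andP; split.
  by apply: ge_ereal_sup => _ [v Sv <-]; rewrite lee_fin f_le.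
by apply: ereal_sup_ubound; exists w; rewrite ?fw.
Qed.

Section EmpiricalMmd.
Variables (R : realType) (X : Type) (k : X -> X -> R) (n : nat) (x : 'I_n -> X).
Hypothesis k_kernel : is_kernel k.

Lemma kmat_sym : (kmat k x)^T = kmat k x.
Proof. by apply/matrixP => i j; rewrite !mxE k_kernel.1. Qed.

Lemma form_kmat_ge0 p : 0 <= form (kmat k x) p p.
Proof.
rewrite form_sum; under eq_bigr => i _ do under eq_bigr => j _ do rewrite mxE.
exact: k_kernel.2.
Qed.

End EmpiricalMmd.

Lemma dotmx_ones (R : realType) n (w : 'cV[R]_n) : dotmx (ones R n) w = \sum_i w i 0.
Proof. by rewrite dotmx_sum; apply: eq_bigr => i _; rewrite mxE mul1r. Qed.

Lemma ones_neq0 (R : realType) n : (0 < n)%N -> ones R n != 0.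
Proof.
move=> n_gt0; apply/eqP => /matrixP/(_ (Ordinal n_gt0) 0).
by rewrite !mxE => /eqP; rewrite oner_eq0.
Qed.

Lemma dotmx_ones_uniform (R : realType) n :
  (0 < n)%N -> dotmx (ones R n) (n%:R^-1 *: ones R n) = 1.
Proof.
move=> n_gt0; rewrite dotmxZr dotmx_ones.
under eq_bigr => i _ do rewrite mxE.
by rewrite sumr_const card_ord mulVf // pnatr_eq0 -lt0n.
Qed.

Lemma objective_dotmx (R : realType) (X : Type) n (x : 'I_n -> X) (l : X -> R) w :
  objective x l w = dotmx (\col_i l (x i)) w.
Proof. by rewrite /objective dotmx_sum; apply: eq_bigr => i _; rewrite mxE mulrC. Qed.

Theorem lemma3 (R : realType) (X : Type) (k : X -> X -> R) (n : nat)
  (x : 'I_n -> X) (l : X -> R) (eps : R) :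
  is_kernel k -> (0 < n)%N ->
  kmat k x \in unitmx ->
  0 < eps ->
  optval x l (feas k x eps) = optval x l (feas_free k x eps) ->
  let K := kmat k x in
  let lv : 'cV[R]_n := \col_i l (x i) in
  let o := ones R n in
  optval x l (feas k x eps) =
    (n%:R^-1 * \sum_(i < n) l (x i)
     + eps * Num.sqrt (((lv^T *m invmx K) *m lv) 0 0
                       - (((lv^T *m invmx K) *m o) 0 0) ^+ 2
                         / (((o^T *m invmx K) *m o) 0 0)))%:E.
Proof.
move=> k_kernel n_gt0 K_unit eps_gt0 -> K lv o.
set u := n%:R^-1 *: o.
have lv_u : dotmx lv u = n%:R^-1 * \sum_(i < n) l (x i).
  by rewrite dotmxZr dotmx_sum; congr (_ * _); apply: eq_bigr => i _; rewrite !mxE mulr1.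
have feas_freeE w : feas_free k x eps w <->
    dotmx o w = 1 /\ Num.sqrt (form K (w - u) (w - u)) <= eps.
  by rewrite /feas_free /dMMD /= dotmx_ones formE; split=> -[? ?]; split.
have o_u := dotmx_ones_uniform R n_gt0; have o_neq0 := ones_neq0 R n_gt0.
have K_sym := kmat_sym x k_kernel; have K_psd := form_kmat_ge0 x k_kernel.
rewrite -!formE -lv_u; apply: ereal_sup_attained => [w /feas_freeE[o_w mmd_w]|].
  rewrite objective_dotmx; exact: slice_dotmx_le o_w mmd_w.
have [w feas_w obj_w] :=
  slice_dotmx_max lv K_sym K_psd K_unit o_neq0 o_u (ltW eps_gt0).
by exists w; [apply/feas_freeE | rewrite objective_dotmx].
Qed.
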